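(* Let $N$ be a nontrivial normal subgroup of $G_2$. If $\phi(N)\simeq A_8$, then $N=L$, where $L$ is the set of elements of $G_2$ expressible as a word of even length in the generators $u,d,f,b,l,r$ and their inverses.
   Context: The $2\times2\times2$ Rubik's cube consists of 8 corner cubelets, each carrying 3 colored stickers. Corner positions are numbered 1 = top-front-left, 2 = top-front-right, 3 = top-back-left, 4 = top-back-right, 5 = bottom-front-left, 6 = bottom-front-right, 7 = bottom-back-left, 8 = bottom-back-right. $G_2$ is the subgroup of the symmetric group on the 24 stickers generated by the six moves $u,d,f,b,l,r$ rotating respectively the top, bottom, front, back, left, right layer of four cubelets by $90^\circ$ clockwise as seen from outside facing that face. $\phi:G_2\to S_8$ records the permutation of corner positions. *)

From mathcomp Require Import all_boot all_fingroup.
From mathcomp Require Import alt.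
Set Implicit Arguments. Unset Strict Implicit. Unset Printing Implicit Defensive.
Local Open Scope group_scope.

(* Corner positions (0-indexed): 0 = top-front-left, 1 = top-front-right,
   2 = top-back-left, 3 = top-back-right, 4 = bottom-front-left,
   5 = bottom-front-right, 6 = bottom-back-left, 7 = bottom-back-right
   (paper's positions 1..8).
   Sticker 3*c + k sits on corner position c; k = 0: its U/D face,
   k = 1: its F/B face, k = 2: its L/R face. *)

(* A quarter turn about the axis of face-type [ax] keeps stickers of type [ax]
   on the same face type and swaps the other two face types. *)
Definition swap_type (ax k : nat) : nat :=
  if k == ax then k else 3 - ax - k.

Definition move_nat (cyc : nat -> nat) (ax : nat) (n : nat) : nat :=
  if cyc (n %/ 3) == n %/ 3 then n
  else 3 * cyc (n %/ 3) + swap_type ax (n %% 3).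

Definition move_fun (cyc : nat -> nat) (ax : nat) (s : 'I_24) : 'I_24 :=
  inord (move_nat cyc ax s).

(* clockwise 4-cycles of corner positions, as seen from outside the face *)
Definition cyc_u (c : nat) : nat :=
  match c with 2 => 3 | 3 => 1 | 1 => 0 | 0 => 2 | _ => c end.
Definition cyc_d (c : nat) : nat :=
  match c with 6 => 4 | 4 => 5 | 5 => 7 | 7 => 6 | _ => c end.
Definition cyc_f (c : nat) : nat :=
  match c with 0 => 1 | 1 => 5 | 5 => 4 | 4 => 0 | _ => c end.
Definition cyc_b (c : nat) : nat :=
  match c with 2 => 6 | 6 => 7 | 7 => 3 | 3 => 2 | _ => c end.
Definition cyc_l (c : nat) : nat :=
  match c with 2 => 0 | 0 => 4 | 4 => 6 | 6 => 2 | _ => c end.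
Definition cyc_r (c : nat) : nat :=
  match c with 1 => 3 | 3 => 7 | 7 => 5 | 5 => 1 | _ => c end.

Lemma move_fun_inj cyc ci ax :
  all (fun n => (move_nat cyc ax n < 24) &&
                (move_nat ci ax (move_nat cyc ax n) == n)) (iota 0 24) ->
  injective (move_fun cyc ax).
Proof.
move=> /allP H x y Exy.
have mem (z : 'I_24) : (nat_of_ord z \in iota 0 24) by rewrite mem_iota ltn_ord.
case/andP: (H x (mem x)) => lx /eqP ix.
case/andP: (H y (mem y)) => ly /eqP iy.
have E : move_nat cyc ax x = move_nat cyc ax y.
  by move: (congr1 val Exy); rewrite /move_fun /= !inordK.
by apply/val_inj => /=; rewrite -ix E iy.
Qed.

Lemma move_u_inj : injective (move_fun cyc_u 0).
Proof. by apply: (@move_fun_inj _ (cyc_u \o cyc_u \o cyc_u)). Qed.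
Lemma move_d_inj : injective (move_fun cyc_d 0).
Proof. by apply: (@move_fun_inj _ (cyc_d \o cyc_d \o cyc_d)). Qed.
Lemma move_f_inj : injective (move_fun cyc_f 1).
Proof. by apply: (@move_fun_inj _ (cyc_f \o cyc_f \o cyc_f)). Qed.
Lemma move_b_inj : injective (move_fun cyc_b 1).
Proof. by apply: (@move_fun_inj _ (cyc_b \o cyc_b \o cyc_b)). Qed.
Lemma move_l_inj : injective (move_fun cyc_l 2).
Proof. by apply: (@move_fun_inj _ (cyc_l \o cyc_l \o cyc_l)). Qed.
Lemma move_r_inj : injective (move_fun cyc_r 2).
Proof. by apply: (@move_fun_inj _ (cyc_r \o cyc_r \o cyc_r)). Qed.

Definition mv_u : {perm 'I_24} := perm move_u_inj.
Definition mv_d : {perm 'I_24} := perm move_d_inj.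
Definition mv_f : {perm 'I_24} := perm move_f_inj.
Definition mv_b : {perm 'I_24} := perm move_b_inj.
Definition mv_l : {perm 'I_24} := perm move_l_inj.
Definition mv_r : {perm 'I_24} := perm move_r_inj.

Definition cube_gens : seq {perm 'I_24} := [:: mv_u; mv_d; mv_f; mv_b; mv_l; mv_r].

Definition G2 : {group {perm 'I_24}} := <<[set x in cube_gens]>>%G.

(* phi : G_2 -> S_8, the induced permutation of corner positions:
   phi g sends c to the position of the cubelet that g moves away from c.
   (Defined on all of Sym(24), with default 1 where this is not a
   permutation; on G_2 it is the homomorphism of the paper.) *)
Definition corner_of (s : 'I_24) : 'I_8 := inord (s %/ 3).
Definition phi (g : {perm 'I_24}) : {perm 'I_8} :=
  insubd (1 : {perm 'I_8}) [ffun c : 'I_8 => corner_of (g (inord (3 * c)))].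

Definition in_L (g : {perm 'I_24}) : Prop :=
  exists w : seq {perm 'I_24},
    [/\ all (fun x => (x \in cube_gens) || (x^-1 \in cube_gens)) w,
        ~~ odd (size w) & g = \prod_(x <- w) x].

From mathcomp Require Import all_boot all_fingroup ssralg zmodp.
From mathcomp Require Import alt commutator gseries zify.
Set Implicit Arguments. Unset Strict Implicit. Unset Printing Implicit Defensive.
Import GRing.Theory.
Local Open Scope group_scope.

(* Label each sticker by its corner c and an orientation i in Z/3.  With a
   suitable orientation convention every quarter turn acts as
   (c, i) |-> (s c, a c + i), where s is a 4-cycle of corners and the twist
   vector a has zero sum.  So G2 lies in the group of such permutations, phi is
   a homomorphism on G2 sending every generator to an odd permutation, and L is
   the preimage of A8 in G2.
   Since A8 is simple, the only subgroup of S8 isomorphic to A8 is A8, so N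
   contains a lift of every even corner permutation.  Commuting such a lift
   with an explicit two-corner twist of G2 puts into N a twist by +1 at one
   corner and -1 at another; conjugating and adding such twists yields every
   zero-sum twist, i.e. all of ker phi.  Hence N is the preimage of A8 too. *)

Lemma isog_Alt_eq (T : finType) (H : {group {perm T}}) :
  4 < #|T| -> H \isog 'Alt_T -> H :=: 'Alt_T.
Proof.
move=> T_gt4 isoH; have cardH := card_isog isoH.
have Alt_gt2 : 2 < #|'Alt_T|.
  have := card_Alt (ltnW (ltnW (ltnW T_gt4))).
  by case: #|T| T_gt4 => // n n_gt3; rewrite factS; have := fact_gt0 n; nia.
have simH : simple H by rewrite (isog_simple isoH) simple_Alt5.
have nsHA_H : H :&: 'Alt_T <| H := normalGI (subsetT H) (Alt_normal T).
case/simpleP: simH => _ /(_ _ nsHA_H) [HA1 | HA_H]; last first.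
  have sHA : H \subset 'Alt_T by rewrite -{1}HA_H; apply: subsetIr.
  by apply/eqP; rewrite eqEcard sHA cardH /=.
have : (#|H| * #|'Alt_T| <= 2 * #|'Alt_T|)%N.
  rewrite mul_cardG HA1 cards1 muln1 card_Alt ?(leq_trans _ T_gt4) //.
  by rewrite -card_Sym subset_leq_card ?subsetT.
by rewrite leq_pmul2r ?cardG_gt0 // cardH leqNgt Alt_gt2.
Qed.

Lemma all_iota_ord n (P : pred nat) : all P (iota 0 n) -> forall i : 'I_n, P i.
Proof. by move/allP => allP i; apply: allP; rewrite mem_iota ltn_ord. Qed.

Lemma all_iota_ord2 m n (P : nat -> pred nat) :
  all (fun i => all (P i) (iota 0 n)) (iota 0 m) -> forall (i : 'I_m) (j : 'I_n), P i j.
Proof. by move=> allP i; apply: all_iota_ord; apply: (all_iota_ord allP). Qed.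

(* The face types U/D, F/B, L/R go round a corner in opposite senses on the
   corners of even and of odd coordinate weight, so orientations are counted
   backwards on the odd corners 1, 2, 4, 7; then each quarter turn adds a
   constant to the orientations of the three stickers of a corner. *)
Definition odd_corner (c : nat) : bool := c \in [:: 1; 2; 4; 7]%N.
Definition flip (i : nat) : nat := (3 - i) %% 3.
Definition sticker_nat (c i : nat) : nat := (3 * c + if odd_corner c then flip i else i)%N.
Definition orient_nat (n : nat) : nat :=
  if odd_corner (n %/ 3) then flip (n %% 3) else n %% 3.

Lemma sticker_subproof (c : 'I_8) (i : 'I_3) : sticker_nat c i < 24.
Proof. exact: (all_iota_ord2 (P := fun c i => sticker_nat c i < 24)). Qed.
Lemma orient_subproof (s : 'I_24) : orient_nat s < 3.
Proof. exact: (all_iota_ord (P := fun n => orient_nat n < 3)). Qed.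

Definition sticker (c : 'I_8) (i : 'I_3) : 'I_24 := Ordinal (sticker_subproof c i).
Definition orient (s : 'I_24) : 'I_3 := Ordinal (orient_subproof s).

Lemma corner_of_sticker c i : corner_of (sticker c i) = c.
Proof.
apply/val_inj; rewrite /= inordK; last by rewrite ltn_divLR.
apply/eqP; move: c i.
by apply: (all_iota_ord2 (P := fun c i => sticker_nat c i %/ 3 == c)).
Qed.

Lemma orient_sticker c i : orient (sticker c i) = i.
Proof.
apply/val_inj/eqP; move: c i.
by apply: (all_iota_ord2 (P := fun c i => orient_nat (sticker_nat c i) == i)).
Qed.

Lemma sticker_corner s : sticker (corner_of s) (orient s) = s.
Proof.
apply/val_inj/eqP; rewrite /= inordK; last by rewrite ltn_divLR.
by move: s; apply: (all_iota_ord (P := fun n => sticker_nat (n %/ 3) (orient_nat n) == n)).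
Qed.

Local Open Scope ring_scope.
Local Open Scope group_scope.

Implicit Types (s t : {perm 'I_8}) (a b u v : {ffun 'I_8 -> 'I_3}).

Definition wreath_fun s a (x : 'I_24) : 'I_24 :=
  sticker (s (corner_of x)) (a (corner_of x) + orient x).

Lemma wreath_fun_inj s a : injective (wreath_fun s a).
Proof.
move=> x y /[dup] /(congr1 corner_of) + /(congr1 orient).
rewrite !corner_of_sticker !orient_sticker => /perm_inj cxy.
by rewrite cxy => /addrI oxy; rewrite -[x]sticker_corner -[y]sticker_corner cxy oxy.
Qed.

Definition wreath s a : {perm 'I_24} := perm (@wreath_fun_inj s a).

Lemma wreathE s a c i : wreath s a (sticker c i) = sticker (s c) (a c + i).
Proof. by rewrite permE /wreath_fun corner_of_sticker orient_sticker. Qed.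

Lemma wreathP (g : {perm 'I_24}) s a :
  (forall c i, g (sticker c i) = sticker (s c) (a c + i)) -> g = wreath s a.
Proof. by move=> gE; apply/permP => x; rewrite -[x]sticker_corner gE wreathE. Qed.

Lemma wreathM s a t b :
  wreath s a * wreath t b = wreath (s * t) [ffun c => b (s c) + a c].
Proof. by apply: wreathP => c i; rewrite permM !wreathE permM ffunE addrA. Qed.

Lemma phi_wreath s a : phi (wreath s a) = s.
Proof.
rewrite /phi (_ : [ffun c => _] = val s) ?valKd //; apply/ffunP => c.
rewrite ffunE; have -> : inord (3 * c)%N = sticker c 0.
  apply/val_inj; rewrite /= inordK; last by have := ltn_ord c; lia.
  by rewrite /sticker_nat; case: ifP; rewrite addn0.
by rewrite wreathE corner_of_sticker pvalE.
Qed.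

Definition twist v : {perm 'I_24} := wreath 1 v.

Lemma twist0 : twist 0 = 1.
Proof. by symmetry; apply: wreathP => c i; rewrite !perm1 ffunE add0r. Qed.

Lemma twistD u v : twist (u + v) = twist u * twist v.
Proof.
by rewrite /twist wreathM mulg1; congr wreath; apply/ffunP => c; rewrite !ffunE perm1 addrC.
Qed.

Lemma twistMn v n : twist (v *+ n) = twist v ^+ n.
Proof. by elim: n => [|n IHn]; rewrite ?twist0 // mulrS twistD IHn expgS. Qed.

Lemma twist_conj v u s b : (forall c, u (s c) = v c) -> twist v ^ wreath s b = twist u.
Proof.
move=> uE; apply: (mulgI (wreath s b)); rewrite /conjg mulKVg !wreathM mulg1 mul1g.
by congr wreath; apply/ffunP => c; rewrite !ffunE perm1 uE addrC.
Qed.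

Definition zero_sum_wreath : {set {perm 'I_24}} :=
  [set wreath s a | s in [set: {perm 'I_8}],
                    a in [set a : {ffun 'I_8 -> 'I_3} | \sum_c a c == 0]].

Lemma wreath_zero_sum s a : \sum_c a c = 0 -> wreath s a \in zero_sum_wreath.
Proof. by move=> a0; apply/imset2P; exists s a; rewrite ?inE ?a0. Qed.

Lemma zero_sum_wreathP g : g \in zero_sum_wreath ->
  exists2 a : {ffun 'I_8 -> 'I_3}, \sum_c a c = 0 & g = wreath (phi g) a.
Proof. by move=> /imset2P[s a _ + ->]; rewrite inE phi_wreath => /eqP a0; exists a. Qed.

Lemma zero_sum_wreath_group_set : group_set zero_sum_wreath.
Proof.
apply/andP; split.
  by rewrite -twist0 wreath_zero_sum // big1 // => c _; rewrite ffunE.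
apply/subsetP => _ /mulsgP[g h /imset2P[s a _ + ->] /imset2P[t b _ + ->] ->].
rewrite !inE => /eqP a0 /eqP b0; rewrite wreathM wreath_zero_sum //.
under eq_bigr do rewrite ffunE.
by rewrite big_split /= a0 addr0 -[RHS]b0 [RHS](reindex_inj (@perm_inj _ s)).
Qed.
Canonical zero_sum_wreath_group := Group zero_sum_wreath_group_set.

Lemma phiM_zero_sum : {in zero_sum_wreath &, {morph phi : g h / g * h}}.
Proof.
by move=> _ _ /imset2P[s a _ _ ->] /imset2P[t b _ _ ->]; rewrite wreathM !phi_wreath.
Qed.

(* Permutations do not compute (finfun is locked), so facts about explicit
   moves are checked on nat-level mirrors: tperm_nat for transpositions of
   corners and move_nat_of for the moves. *)
Definition tperm_nat (x y z : nat) : nat :=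
  if z == x then y else if z == y then x else z.

Lemma val_tperm n (x y z : 'I_n) : val (tperm x y z) = tperm_nat x y z.
Proof.
rewrite /tperm_nat; case: tpermP => [->|->|/eqP zx /eqP zy]; rewrite ?eqxx //.
  by case: eqP => // /val_inj ->.
by rewrite !val_eqE (negbTE zx) (negbTE zy).
Qed.

Definition tperms (ps : seq ('I_8 * 'I_8)) : {perm 'I_8} := \prod_(p <- ps) tperm p.1 p.2.

Definition tperms_nat (ps : seq ('I_8 * 'I_8)) (n : nat) : nat :=
  foldl (fun n (p : 'I_8 * 'I_8) => tperm_nat p.1 p.2 n) n ps.

Lemma val_tperms ps c : val (tperms ps c) = tperms_nat ps c.
Proof.
elim: ps c => [|p ps IHps] c; first by rewrite /tperms big_nil perm1.
by rewrite /tperms big_cons permM IHps val_tperm.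
Qed.

Lemma odd_tperms ps : odd_perm (tperms ps) = odd (count (fun p => p.1 != p.2) ps).
Proof.
elim: ps => [|p ps IHps]; first by rewrite /tperms big_nil odd_perm1.
by rewrite /tperms big_cons odd_permM odd_tperm -/(tperms ps) IHps /= oddD oddb.
Qed.

Definition twist_of (l : seq nat) : {ffun 'I_8 -> 'I_3} := [ffun c : 'I_8 => (nth 0 l c)%:R].

Lemma sum_twist_of l : \sum_c twist_of l c = (\sum_(0 <= i < 8) nth 0 l i)%N%:R.
Proof. by rewrite big_mkord natr_sum; apply: eq_bigr => c _; rewrite ffunE. Qed.

Definition move_of (k : nat) : {perm 'I_24} := nth 1 cube_gens k.
Definition move_nat_of (k : nat) : nat -> nat :=
  nth id [:: move_nat cyc_u 0; move_nat cyc_d 0; move_nat cyc_f 1;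
             move_nat cyc_b 1; move_nat cyc_l 2; move_nat cyc_r 2] k.

Lemma val_move k x : (k < 6)%N -> val (move_of k x) = move_nat_of k x.
Proof.
by case: k => [|[|[|[|[|[|//]]]]]] _; rewrite /move_of /= permE inordK //;
  move: x; apply: (all_iota_ord (P := fun n => move_nat _ _ n < 24)%N).
Qed.

Definition word_nat (w : seq nat) (n : nat) : nat := foldl (fun n k => move_nat_of k n) n w.

Lemma val_word w x : all (fun k => k < 6)%N w ->
  val ((\prod_(k <- w) move_of k) x) = word_nat w x.
Proof.
elim: w x => [|k w IHw] x; first by rewrite big_nil perm1.
by case/andP=> lt_k6 w6; rewrite big_cons permM IHw //= val_move.
Qed.

Lemma word_wreath w ps l : all (fun k => k < 6)%N w ->
  all (fun n => word_nat w n == sticker_nat (tperms_nat ps (n %/ 3))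
                                 ((nth 0 l (n %/ 3) + orient_nat n) %% 3)) (iota 0 24) ->
  \prod_(k <- w) move_of k = wreath (tperms ps) (twist_of l).
Proof.
move=> w6 /all_iota_ord wE; apply/permP => x; apply/val_inj.
rewrite val_word // permE /wreath_fun /= val_tperms ffunE /= inordK ?ltn_divLR //.
by rewrite Zp_nat /= modnDml; apply/eqP/wE.
Qed.

Definition i8 (n : nat) : 'I_8 := inZp n.

Definition cycle4 (c0 c1 c2 c3 : nat) : seq ('I_8 * 'I_8) :=
  [:: (i8 c0, i8 c1); (i8 c0, i8 c2); (i8 c0, i8 c3)].

Definition move_corners (k : nat) : seq ('I_8 * 'I_8) :=
  nth [::] [:: cycle4 0 2 3 1; cycle4 4 5 7 6; cycle4 0 1 5 4;
               cycle4 2 6 7 3; cycle4 0 4 6 2; cycle4 1 3 7 5] k.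
Definition move_twist (k : nat) : seq nat :=
  nth [::] [:: [:: 0; 0; 0; 0; 0; 0; 0; 0]; [:: 0; 0; 0; 0; 0; 0; 0; 0];
               [:: 1; 2; 0; 0; 2; 1; 0; 0]; [:: 0; 0; 2; 1; 0; 0; 1; 2];
               [:: 2; 0; 1; 0; 1; 0; 2; 0]; [:: 0; 1; 0; 2; 0; 2; 0; 1]]%N k.

Lemma move_wreath k : (k < 6)%N ->
  move_of k = wreath (tperms (move_corners k)) (twist_of (move_twist k)).
Proof.
move=> lt_k6; transitivity (\prod_(j <- [:: k]) move_of j); first by rewrite big_seq1.
apply: word_wreath; first by rewrite /= lt_k6.
by case: k lt_k6 => [|[|[|[|[|[|//]]]]]] _; vm_compute.
Qed.

Lemma move_zero_sum k : (k < 6)%N -> move_of k \in zero_sum_wreath.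
Proof.
move=> lt_k6; rewrite move_wreath // wreath_zero_sum // sum_twist_of Zp_nat.
by apply/val_inj; case: k lt_k6 => [|[|[|[|[|[|//]]]]]] _; rewrite unlock.
Qed.

Lemma odd_phi_move k : (k < 6)%N -> odd_perm (phi (move_of k)).
Proof.
move=> lt_k6; rewrite move_wreath // phi_wreath odd_tperms.
by case: k lt_k6 => [|[|[|[|[|[|//]]]]]].
Qed.

Lemma cube_gensP x : reflect (exists2 k, k < 6 & x = move_of k)%N (x \in cube_gens).
Proof.
apply: (iffP idP) => [x_gen | [k lt_k6 ->]]; last exact: mem_nth.
by exists (index x cube_gens); rewrite ?index_mem // /move_of nth_index.
Qed.

Lemma mem_gen_G2 x : x \in cube_gens -> x \in G2.
Proof. by move=> x_gen; apply: mem_gen; rewrite inE. Qed.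

Lemma G2_sub_zero_sum : G2 \subset zero_sum_wreath.
Proof.
rewrite gen_subG; apply/subsetP => x.
by rewrite inE => /cube_gensP[k /move_zero_sum + ->].
Qed.

Lemma phi_morphM : {in G2 &, {morph phi : g h / g * h}}.
Proof.
move=> g h /(subsetP G2_sub_zero_sum) Wg /(subsetP G2_sub_zero_sum).
exact: phiM_zero_sum.
Qed.
Canonical phi_morphism := Morphism phi_morphM.

Definition cube_letter (x : {perm 'I_24}) : bool :=
  (x \in cube_gens) || (x^-1 \in cube_gens).

Lemma cube_letterP x : cube_letter x -> x \in G2 /\ odd_perm (phi x).
Proof.
have gen_odd y : y \in cube_gens -> odd_perm (phi y).
  by case/cube_gensP => k /odd_phi_move + ->.
case/orP => [x_gen | /[dup] /mem_gen_G2 + /gen_odd]; first by rewrite mem_gen_G2 ?gen_odd.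
by rewrite groupV => G2x; rewrite morphV // odd_permV.
Qed.

Lemma word_G2 w : all cube_letter w -> \prod_(x <- w) x \in G2.
Proof.
move=> /allP w_letters; rewrite big_seq group_prod // => x.
by case/w_letters/cube_letterP.
Qed.

Lemma odd_phi_word w : all cube_letter w ->
  odd_perm (phi (\prod_(x <- w) x)) = odd (size w).
Proof.
elim: w => [|x w IHw]; first by rewrite big_nil morph1 odd_perm1.
case/andP => /cube_letterP[G2x odd_x] w_letters.
by rewrite big_cons morphM ?word_G2 // odd_permM odd_x IHw.
Qed.

Lemma G2_word g : g \in G2 ->
  exists2 w : seq {perm 'I_24}, all cube_letter w & g = \prod_(x <- w) x.
Proof.
case/gen_prodgP => n [c c_gen ->]; exists [seq c i | i <- index_enum 'I_n].
  by apply/allP => _ /mapP[i _ ->]; move: (c_gen i); rewrite inE /cube_letter => ->.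
by rewrite big_map.
Qed.

Definition pair_twist (i j : 'I_8) : {ffun 'I_8 -> 'I_3} :=
  [ffun x => (x == i)%:R - (x == j)%:R].

Lemma pair_twistxx i : pair_twist i i = 0.
Proof. by apply/ffunP => x; rewrite !ffunE subrr. Qed.

Lemma pair_twist_trans i j k : pair_twist i j + pair_twist j k = pair_twist i k.
Proof. by apply/ffunP => x; rewrite !ffunE addrA subrK. Qed.

Lemma twist_pair_conj i j s b :
  twist (pair_twist i j) ^ wreath s b = twist (pair_twist (s i) (s j)).
Proof. by apply: twist_conj => c; rewrite !ffunE !(inj_eq perm_inj). Qed.

Lemma pair_twist_decomp a : \sum_c a c = 0 -> a = \sum_c pair_twist c (i8 0) *+ a c.
Proof.
move=> a0; apply/ffunP => x; rewrite sum_ffunE.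
under eq_bigr => c _ do
  rewrite ffunMnE ffunE mulrnBl (mulrnAC 1 (x == c)) (mulrnAC 1 (x == i8 0)) natr_Zp.
rewrite sumrB sumrMnl a0 mul0rn subr0 (bigD1 x) //= eqxx mulr1n.
by rewrite big1 ?addr0 // => c; rewrite eq_sym => /negbTE->.
Qed.

(* With u, d, b at indices 0, 1, 3 of cube_gens and X = b d b^-1 d^-1 (of
   order 6), this is the commutator X^-2 u^-1 X^2 u, inverses written as
   cubes. *)
Definition bd_commutator : seq nat := [:: 3; 1; 3; 3; 3; 1; 1; 1]%N.
Definition corner_twist_word : seq nat :=
  flatten (nseq 4 bd_commutator) ++ [:: 0; 0; 0]%N ++
  bd_commutator ++ bd_commutator ++ [:: 0]%N.
Definition corner_twist : {perm 'I_24} := \prod_(k <- corner_twist_word) move_of k.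

Lemma corner_twist_G2 : corner_twist \in G2.
Proof.
have word6 : all (fun k => k < 6)%N corner_twist_word by [].
rewrite /corner_twist big_seq group_prod // => k /(allP word6) lt_k6.
by rewrite mem_gen_G2 // mem_nth.
Qed.

Lemma corner_twistE : corner_twist = twist (pair_twist (i8 3) (i8 2)).
Proof.
have -> : corner_twist = wreath (tperms [::]) (twist_of [:: 0; 0; 2; 1; 0; 0; 0; 0]%N).
  by apply: word_wreath; vm_compute.
rewrite /tperms big_nil; congr wreath; apply/ffunP => c; rewrite !ffunE.
by apply/val_inj; case: c => [[|[|[|[|[|[|[|[|//]]]]]]]] ?].
Qed.

Section NormalSubgroupOverAlt.

Variable N : {group {perm 'I_24}}.
Hypotheses (nsNG : N <| G2) (phiN : phi @* N = 'Alt_('I_8)).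

Lemma Alt_lift p : p \in 'Alt_('I_8) -> exists b, wreath p b \in N.
Proof.
rewrite -phiN => /morphimP[g G2g Ng ->].
have [a _ ga] := zero_sum_wreathP (subsetP G2_sub_zero_sum g G2g).
by exists a; rewrite -ga.
Qed.

Lemma twist_pair_Alt i j p : twist (pair_twist i j) \in N -> p \in 'Alt_('I_8) ->
  twist (pair_twist (p i) (p j)) \in N.
Proof. by move=> Nij /Alt_lift[b Nb]; rewrite -(twist_pair_conj _ _ _ b) groupJ. Qed.

(* A lift of the 3-cycle (2 0 1) fixes corner 3 and moves the -1 of the corner
   twist from corner 2 to corner 0, so its commutator with the corner twist is
   the difference of the two. *)
Lemma twist_pair20_mem : twist (pair_twist (i8 2) (i8 0)) \in N.
Proof.
pose p := tperm (i8 2) (i8 0) * tperm (i8 2) (i8 1).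
have [b Nb] : exists b, wreath p b \in N.
  by apply: Alt_lift; rewrite Alt_even odd_permM !odd_tperm.
have p3 : p (i8 3) = i8 3 by rewrite permM !tpermD.
have p2 : p (i8 2) = i8 0 by rewrite permM tpermL tpermD.
have sRN : [~: G2, N] \subset N by rewrite commg_subr normal_norm.
have := subsetP sRN _ (mem_commg corner_twist_G2 Nb).
rewrite /commg corner_twistE twist_pair_conj p3 p2.
by rewrite -(pair_twist_trans (i8 3) (i8 2) (i8 0)) twistD mulKg.
Qed.

Lemma twist_pair_mem c : twist (pair_twist c (i8 0)) \in N.
Proof.
have [-> | c0] := eqVneq c (i8 0); first by rewrite pair_twistxx twist0 group1.
have [-> | c2] := eqVneq c (i8 2); first exact: twist_pair20_mem.
pose p := tperm (i8 0) (i8 2) * tperm (i8 0) c.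
have Ap : p \in 'Alt_('I_8) by rewrite Alt_even odd_permM !odd_tperm [i8 0 == c]eq_sym c0.
have p2 : p (i8 2) = c by rewrite permM tpermR tpermL.
have p0 : p (i8 0) = i8 2 by rewrite permM tpermL tpermD // eq_sym.
rewrite -(pair_twist_trans c (i8 2)) twistD groupM ?twist_pair20_mem //.
by have := twist_pair_Alt twist_pair20_mem Ap; rewrite p2 p0.
Qed.

Lemma twist_mem a : \sum_c a c = 0 -> twist a \in N.
Proof.
move/pair_twist_decomp ->; rewrite (big_morph twist twistD twist0) group_prod // => c _.
by rewrite twistMn groupX ?twist_pair_mem.
Qed.

Lemma ker_phi_sub : 'ker phi \subset N.
Proof.
apply/subsetP => g kg.
have [a a0 ->] := zero_sum_wreathP (subsetP G2_sub_zero_sum g (dom_ker kg)).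
by rewrite (mker kg); apply: twist_mem.
Qed.

End NormalSubgroupOverAlt.

Theorem proposition2p9 (N : {group {perm 'I_24}}) :
  N <| G2 -> N :!=: 1 ->
  (phi @: N) \isog ('Alt_('I_8)) ->
  forall g : {perm 'I_24}, g \in N <-> in_L g.
Proof.
move=> nsNG _ isoN; have sNG := normal_sub nsNG.
have phiN : phi @* N = 'Alt_('I_8).
  by apply: isog_Alt_eq; rewrite ?card_ord //= morphimEsub.
have kerN := ker_phi_sub nsNG phiN.
move=> g; split=> [Ng | [w [w_letters w_even ->]]].
  have G2g := subsetP sNG g Ng; have [w w_letters gw] := G2_word G2g.
  by exists w; split=> //; rewrite -odd_phi_word // -gw -Alt_even -phiN mem_morphim.
by rewrite -(morphimGK kerN sNG) mem_morphpre ?word_G2 // phiN Alt_even odd_phi_word.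
Qed.
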